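(* If $\mathcal I$ is a P-ideal on $\omega$, then $\mathrm{add}_\omega(\mathcal I)=\mathrm{add}^*(\mathcal I)$.
   Context: An ideal on $\omega$ is a family $\mathcal I\subseteq\mathcal P(\omega)$ closed under finite unions and subsets, containing all finite sets, with $\omega\notin\mathcal I$. $\mathcal I$ is a P-ideal if for every countable $\mathcal A\subseteq\mathcal I$ there is $B\in\mathcal I$ with $A\setminus B$ finite for all $A\in\mathcal A$. With the convention $\min\emptyset=\infty$: $\mathrm{add}_\omega(\mathcal I)=\min\{|\mathcal A|:\mathcal A\subseteq\mathcal I$ and for every sequence $(B_n)\in\mathcal I^\omega$ there is $A\in\mathcal A$ with $A\not\subseteq B_n$ for all $n\}$; $\mathrm{add}^*(\mathcal I)=\min\{|\mathcal A|:\mathcal A\subseteq\mathcal I$ and for every $B\in\mathcal I$ there is $A\in\mathcal A$ with $A\setminus B$ infinite$\}$. *)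

From mathcomp Require Import all_boot.
From mathcomp Require Import boolp classical_sets cardinality.
Set Implicit Arguments. Unset Strict Implicit. Unset Printing Implicit Defensive.
Local Open Scope classical_set_scope.

Definition ideal (I : set (set nat)) : Prop :=
  (forall A B, I A -> I B -> I (A `|` B)) /\
  (forall A B, B `<=` A -> I A -> I B) /\
  (forall A : set nat, finite_set A -> I A) /\
  ~ I [set: nat].

Definition P_ideal (I : set (set nat)) : Prop :=
  ideal I /\
  forall F : set (set nat), countable F -> F `<=` I ->
    exists2 B, I B & forall A, F A -> finite_set (A `\` B).

Definition add_omega_family (I : set (set nat)) (F : set (set nat)) : Prop :=
  F `<=` I /\
  forall B : nat -> set nat, (forall n, I (B n)) ->
    exists2 A, F A & forall n, ~ (A `<=` B n).

Definition add_star_family (I : set (set nat)) (F : set (set nat)) : Prop :=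
  F `<=` I /\
  forall B, I B -> exists2 A, F A & infinite_set (A `\` B).

(* min{|F| : W F} <= min{|F| : W' F}, with min of the empty class = infinity:
   every W'-family F' has a W-family of cardinality at most |F'|. *)
Definition min_card_le (W W' : set (set nat) -> Prop) : Prop :=
  forall F', W' F' -> exists2 F, W F & card_le F F'.

Definition min_card_eq (W W' : set (set nat) -> Prop) : Prop :=
  min_card_le W W' /\ min_card_le W' W.

From mathcomp Require Import all_boot.
From mathcomp Require Import boolp classical_sets cardinality.
Local Open Scope classical_set_scope.

(* Both inequalities hold with the same witnessing family.  If F is not
   bounded modulo finite by any single B in I, it is not bounded by any
   countably many B_n in I either, because the P-ideal property yields a
   single C in I with every B_n contained in C modulo finite.  Conversely,
   if F escapes every B_n := B ∪ {0, ..., n-1} (all of them in I), then some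
   A in F meets the complement of B above every n, so A \ B is infinite. *)

Lemma finite_set_nat_bounded (A : set nat) :
  finite_set A -> exists n, A `<=` `I_n.
Proof.
move=> /finite_seqP [s ->]; exists (\sum_(i <- s) i).+1 => x /= xs.
by rewrite ltnS (big_rem x xs) /= leq_addr.
Qed.

Section IdealFamilies.

Context {I : set (set nat)}.

Lemma P_ideal_seq_pseudo_union : P_ideal I ->
  forall B : nat -> set nat, (forall n, I (B n)) ->
  exists2 C, I C & forall n, finite_set (B n `\` C).
Proof.
move=> [_ IP] B IB.
have [|C IC BC] := IP (range B) (card_image_le _ _); first by move=> _ [n _ <-].
by exists C => // n; apply: BC; exists n.
Qed.

Lemma add_star_family_add_omega_family (F : set (set nat)) :
  (forall B : nat -> set nat, (forall n, I (B n)) ->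
     exists2 C, I C & forall n, finite_set (B n `\` C)) ->
  add_star_family I F -> add_omega_family I F.
Proof.
move=> pseudo_union [FI escapeF]; split=> // B IB.
have [C IC BC] := pseudo_union B IB.
have [A FA AC] := escapeF C IC; exists A => // n AB.
by apply: AC; apply: sub_finite_set (BC n) => x [/AB].
Qed.

Lemma add_omega_family_add_star_family (F : set (set nat)) :
  (forall A B, I A -> I B -> I (A `|` B)) ->
  (forall A : set nat, finite_set A -> I A) ->
  add_omega_family I F -> add_star_family I F.
Proof.
move=> IU Ifin [FI escapeF]; split=> // B IB.
have IBn n : I (B `|` `I_n) by apply: IU => //; apply/Ifin/finite_II.
have [A FA AB] := escapeF _ IBn; exists A => // /finite_set_nat_bounded [n ABn].
apply: (AB n) => x Ax; have [Bx|nBx] := pselect (B x); first by left.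
by right; apply: ABn.
Qed.

End IdealFamilies.

Theorem proposition5p7 (I : set (set nat)) :
  P_ideal I -> min_card_eq (add_omega_family I) (add_star_family I).
Proof.
move=> PI; have [[IU [_ [Ifin _]]] _] := PI.
split=> F WF; (exists F; last exact: card_lexx).
- exact: add_star_family_add_omega_family (P_ideal_seq_pseudo_union PI) WF.
- exact: add_omega_family_add_star_family IU Ifin WF.
Qed.
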